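(* Let $P.\phi$ be a DQBF with prefix $P=\forall x_1,\dots,x_n\,\exists y_1(D_1),\dots,y_k(D_k)$ for $X$ and $Y$, and let $G_{\mathrm{sem}}$ be a semantic symmetry group for $P.\phi$. If $\psi\in\operatorname{BF}(X\cup Y)$ is a conjunctive symmetry breaker for $G_{\mathrm{sem}}$, then $P.\phi$ is true if and only if $P.(\phi\wedge\psi)$ is true.
   Context: $X=\{x_1,\dots,x_n\}$ and $Y=\{y_1,\dots,y_k\}$ are finite disjoint sets of propositional variables. For $V\subseteq X\cup Y$, $\operatorname{BF}(V)$ is the set of all propositional formulas built from $\top,\bot$, the variables in $V$ and the usual connectives. An assignment for $V$ is a function $\sigma:V\to\{\top,\bot\}$; $\mathcal A(V)$ is the set of all of them and $[\phi]_\sigma$ is the truth value of $\phi$ under $\sigma$. A prefix is $P=\forall x_1,\dots,x_n\,\exists y_1(D_1),\dots,y_k(D_k)$ with dependency sets $D_j\subseteq X$; for $\phi\in\operatorname{BF}(X\cup Y)$, $P.\phi$ is a DQBF. An interpretation for $P$ is a tuple $s=(s_1,\dots,s_k)$ of Boolean functions $s_j:\{\top,\bot\}^{|D_j|}\to\{\top,\bot\}$ (each can be represented by a formula in $\operatorname{BF}(D_j)$); $\mathcal S(P)$ is the set of interpretations. For $\sigma\in\mathcal A(X)$ and $s\in\mathcal S(P)$, the induced assignment $\sigma_s\in\mathcal A(X\cup Y)$ agrees with $\sigma$ on $X$ and sets $\sigma_s(y_j)=s_j(\sigma(x_{i_1}),\dots,\sigma(x_{i_d}))$ where $D_j=\{x_{i_1},\dots,x_{i_d}\}$,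 $i_1<\dots<i_d$. The truth value of $P.\phi$ under $s$ is $[P.\phi]_s=\bigwedge_{\sigma\in\mathcal A(X)}[\phi]_{\sigma_s}$; $P.\phi$ is true if some $s$ has $[P.\phi]_s=\top$ (such $s$ is a model). A semantic symmetry group for $P.\phi$ is a group (under composition) $G$ of bijections $\mathcal S(P)\to\mathcal S(P)$ such that $[P.\phi]_s=[P.\phi]_{g(s)}$ for all $g\in G$, $s\in\mathcal S(P)$. Given a group $G_{\mathrm{sem}}$ of bijections $\mathcal S(P)\to\mathcal S(P)$, a formula $\psi\in\operatorname{BF}(X\cup Y)$ is a conjunctive symmetry breaker for $G_{\mathrm{sem}}$ if for every $s\in\mathcal S(P)$ there is $g\in G_{\mathrm{sem}}$ with $[P.\psi]_{g(s)}=\top$. *)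

From mathcomp Require Import all_boot.
Set Implicit Arguments. Unset Strict Implicit. Unset Printing Implicit Defensive.

Inductive pvar (n k : nat) : Type :=
| XV of 'I_n
| YV of 'I_k.

Inductive formula (n k : nat) : Type :=
| FTop | FBot
| FVar of pvar n k
| FNot of formula n k
| FAnd of formula n k & formula n k
| FOr of formula n k & formula n k
| FImp of formula n k & formula n k
| FIff of formula n k & formula n k.

Arguments FTop {n k}. Arguments FBot {n k}.

Fixpoint feval n k (tau : pvar n k -> bool) (f : formula n k) : bool :=
  match f with
  | FTop => true
  | FBot => false
  | FVar v => tau v
  | FNot g => ~~ feval tau g
  | FAnd g h => feval tau g && feval tau h
  | FOr g h => feval tau g || feval tau h
  | FImp g h => feval tau g ==> feval tau h
  | FIff g h => feval tau g == feval tau h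
  end.

(* A prefix is given by the dependency sets D j subset of X, j < k.
   An interpretation s assigns to each y_j a Boolean function
   s_j : {T,F}^{|D_j|} -> {T,F}. *)
Definition interp n k (D : 'I_k -> {set 'I_n}) : Type :=
  forall j : 'I_k, #|D j|.-tuple bool -> bool.

(* The induced assignment sigma_s: the arguments of s_j are the values of
   sigma on D_j listed in increasing index order (enum of a set of ordinals is increasing). *)
Definition induced n k (D : 'I_k -> {set 'I_n}) (s : interp D)
    (sigma : {ffun 'I_n -> bool}) : pvar n k -> bool :=
  fun v => match v with
           | XV i => sigma i
           | YV j => s j [tuple sigma (enum_val (A := D j) i) | i < #|D j|]
           end.

Definition dqbf_val n k (D : 'I_k -> {set 'I_n}) (phi : formula n k)
    (s : interp D) : bool :=
  [forall sigma : {ffun 'I_n -> bool}, feval (induced s sigma) phi].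

Definition dqbf_true n k (D : 'I_k -> {set 'I_n}) (phi : formula n k) : Prop :=
  exists s : interp D, dqbf_val phi s.

Definition bij_group (T : Type) (G : (T -> T) -> Prop) : Prop :=
  [/\ G id,
      (forall g, G g -> bijective g),
      (forall g h, G g -> G h -> G (g \o h)) &
      (forall g, G g -> exists2 g', G g' & cancel g g' /\ cancel g' g)].

Definition sem_symmetry_group n k (D : 'I_k -> {set 'I_n}) (phi : formula n k)
    (G : (interp D -> interp D) -> Prop) : Prop :=
  bij_group G /\ (forall g s, G g -> dqbf_val phi s = dqbf_val phi (g s)).

Definition conj_symmetry_breaker n k (D : 'I_k -> {set 'I_n})
    (G : (interp D -> interp D) -> Prop) (psi : formula n k) : Prop :=
  forall s : interp D, exists2 g, G g & dqbf_val psi (g s).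

Arguments dqbf_val {n k} D phi s.
Arguments dqbf_true {n k} D phi.
Arguments sem_symmetry_group {n k} D phi G.
Arguments conj_symmetry_breaker {n k} D G psi.

From mathcomp Require Import all_boot.

(* A model s of phi is moved by some g in G to g s, which satisfies psi by the
   breaker property and still satisfies phi because g preserves truth values of
   phi; so g s is a model of phi /\ psi. *)

Section ConjunctiveBreaker.

Variables (n k : nat) (D : 'I_k -> {set 'I_n}).

Lemma dqbf_val_FAnd (phi psi : formula n k) (s : interp D) :
  dqbf_val D (FAnd phi psi) s = dqbf_val D phi s && dqbf_val D psi s.
Proof.
apply/forallP/andP => [models_and | [models_phi models_psi] sigma /=].
- by split; apply/forallP => sigma; have /andP[] := models_and sigma.
- by rewrite (forallP models_phi) (forallP models_psi).
Qed.

Lemma dqbf_true_FAndl (phi psi : formula n k) :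
  dqbf_true D (FAnd phi psi) -> dqbf_true D phi.
Proof. by move=> [s]; rewrite dqbf_val_FAnd => /andP[models_phi _]; exists s. Qed.

Lemma invariant_breaker_dqbf_true (phi psi : formula n k)
    (G : (interp D -> interp D) -> Prop) :
  (forall g s, G g -> dqbf_val D phi s = dqbf_val D phi (g s)) ->
  conj_symmetry_breaker D G psi ->
  dqbf_true D phi -> dqbf_true D (FAnd phi psi).
Proof.
move=> phi_invariant breaker [s models_phi].
have [g Gg models_psi] := breaker s.
by exists (g s); rewrite dqbf_val_FAnd -phi_invariant // models_phi.
Qed.

End ConjunctiveBreaker.

Theorem theorem1 (n k : nat) (D : 'I_k -> {set 'I_n}) (phi psi : formula n k)
    (G : (interp D -> interp D) -> Prop) :
  sem_symmetry_group D phi G ->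
  conj_symmetry_breaker D G psi ->
  (dqbf_true D phi <-> dqbf_true D (FAnd phi psi)).
Proof.
move=> [_ phi_invariant] breaker; split.
- exact: invariant_breaker_dqbf_true phi_invariant breaker.
- exact: dqbf_true_FAndl.
Qed.
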